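(* Let $0\le h\le q-2$ and $\lambda_0,\lambda_1\in\mathbb{F}^\times$. For any $y\in A_\infty'$ with $|y|<p^{-h}$, the equation $\big(\mathrm{id}-\lambda_0\lambda_1^{-1}T_{K,0}^{-(q-1)h}\varphi_q\big)(x)=y$ has a unique solution $x\in A_\infty'$ with $|x|<p^{-h}$, given by the convergent series $x=\sum_{n\ge0}\big(\lambda_0\lambda_1^{-1}T_{K,0}^{-(q-1)h}\varphi_q\big)^n(y)$.
   Context: $p$ odd prime, $q=p^f$, $\mathbb{F}$ a finite extension of $\mathbb{F}_p$. Let $A_\infty'=\mathbb{F}((T_{K,0}^{1/p^\infty}))\big\langle\big(T_{K,i}/T_{K,0}^{p^i}\big)^{\pm1/p^\infty},1\le i\le f-1\big\rangle$ (the completed perfect ring obtained from $\mathbb{F}((T_{K,0}))\langle (T_{K,i}/T_{K,0}^{p^i})^{\pm1},1\le i\le f-1\rangle$ with its $T_{K,0}$-adic topology). Let $\varphi$ be the continuous $\mathbb{F}$-linear endomorphism of $A_\infty'$ with $\varphi(T_{K,i})=T_{K,i+1}$ for $0\le i\le f-1$, where $T_{K,f}:=T_{K,0}^q$ (compatibly on $p$-power roots), and $\varphi_q=\varphi^f$. Let $|\cdot|$ be the unique multiplicative norm on $A_\infty'$ inducing its topology with $|T_{K,0}|=p^{-1}$. *)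

From HB Require Import structures.
From mathcomp Require Import all_boot all_order all_algebra.
From mathcomp Require Import boolp classical_sets reals topology normedtype sequences exp.

Set Implicit Arguments.
Unset Strict Implicit.
Unset Printing Implicit Defensive.

Import Order.TTheory GRing.Theory Num.Theory.
Local Open Scope ring_scope.

(* Monomials are  T_{K,0}^{c_0} ... T_{K,f-1}^{c_{f-1}}  with exponents
   c_i in Z[1/p]; an exponent vector is a  seq rat  of size f.
   (Since T_{K,i} = (T_{K,i}/T_{K,0}^{p^i}) T_{K,0}^{p^i}, the T_{K,0}-adic
   order of such a monomial is its weight  sum_i p^i c_i.)
   An element of A'_infty is a coefficient function  c : seq rat -> F
   supported on exponent vectors of size f with entries in Z[1/p], such that
   for every bound N only finitely many monomials in the support have
   T_{K,0}-order < N (this is the T_{K,0}-adic completion of the perfection of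
   F((T_{K,0}))<(T_{K,i}/T_{K,0}^{p^i})^{+-1}>). *)

Section Ainf.
Variables (p f : nat) (F : fieldType).

Definition inZp (r : rat) : Prop := exists n : nat, (`|denq r| %| p ^ n)%N.

Definition wt (e : seq rat) : rat := \sum_(i < size e) (p ^ i)%:R * e`_i.

Definition inA (c : seq rat -> F) : Prop :=
  (forall e, c e != 0 -> size e = f /\ (forall r, r \in e -> inZp r)) /\
  (forall N : rat, exists s : seq (seq rat),
      forall e, c e != 0 -> wt e < N -> e \in s).

(* phi(T_i) = T_{i+1} (i < f-1), phi(T_{f-1}) = T_0^q: on exponents
   (c_0,...,c_{f-1}) |-> (q c_{f-1}, c_0, ..., c_{f-2}).  Its inverse: *)
Definition Minv (e : seq rat) : seq rat :=
  rcons (behead e) (head 0 e / (p ^ f)%:R).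

Definition phiA (c : seq rat -> F) : seq rat -> F :=
  fun e => if size e == f then c (Minv e) else 0.

Definition phiq (c : seq rat -> F) : seq rat -> F := iter f phiA c.

Definition mulT0 (k : int) (c : seq rat -> F) : seq rat -> F :=
  fun e => match e with
           | [::] => c [::]
           | a :: e' => c ((a - k%:~R) :: e')
           end.

Definition Uop (lam : F) (h : nat) (c : seq rat -> F) : seq rat -> F :=
  fun e => lam * mulT0 (- (((p ^ f).-1 * h)%N)%:Z) (phiq c) e.

(* Gauss norm: |x| = sup over the support of p^{-(T_0-order)}; |0| = 0 *)
Definition normA (R : realType) (c : seq rat -> F) : R :=
  sup [set (p%:R : R) `^ (- ratr (wt e)) | e in [set e | c e != 0]].

End Ainf.

(* Put U := lam T_{K,0}^{-(q-1)h} phi_q.  On monomials U acts on the T_{K,0}-order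
   w by w - h |-> q (w - h), so if y is supported in order >= h + d with d > 0
   (such a d exists when |y| < p^-h, because below any bound the support of an
   element of A'_infty is finite), then U^n y is supported in order
   >= h + (n + 1) d.  Hence each monomial receives contributions from only
   finitely many U^n y: the series x = sum_n U^n y is well defined, solves
   x - U x = y, and its N-th tail has norm <= p^-(h + (N + 1) d).  The difference
   of two solutions of norm < p^-h is a fixed point of U supported in order
   >= h + d', hence in order >= h + n d' for every n, hence zero. *)

From Pilot Require Import Defs.
From HB Require Import structures.
From mathcomp Require Import all_boot all_order all_algebra.
From mathcomp Require Import boolp classical_sets cardinality reals.
From mathcomp Require Import topology normedtype sequences exp.
From mathcomp Require Import ring lra.

Set Implicit Arguments.
Unset Strict Implicit.
Unset Printing Implicit Defensive.

Import Order.TTheory GRing.Theory Num.Theory.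
Import numFieldNormedType.Exports.
Local Open Scope classical_set_scope.
Local Open Scope ring_scope.

Section InZp.
Variable p : nat.

Lemma inZp_intP (r : rat) :
  Defs.inZp p r <-> exists n, r * (p ^ n)%:R \is a Num.int.
Proof.
split=> [[n /dvdnP[m Hm]]|[n /intrP[z Hz]]]; exists n.
  have hd : (denq r)%:~R = (`|denq r|%N)%:R :> rat by case: (denq r) (denq_gt0 r).
  have hd0 : (`|denq r|%N)%:R != 0 :> rat by rewrite -hd intr_eq0 denq_neq0.
  rewrite -[r]divq_num_den Hm natrM hd mulrCA mulfVK //.
  by rewrite rpredM ?natr_int ?intr_int.
have e1 : (numq r * (p ^ n)%N%:Z = z * denq r)%R.
  by apply: (@intr_inj rat); rewrite !intrM numqE -Hz mulrAC.
have : (`|denq r| %| `|numq r| * p ^ n)%N.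
  by move/(congr1 absz): e1; rewrite !abszM /= => ->; rewrite dvdn_mull.
by rewrite Gauss_dvdr // coprime_sym coprime_num_den.
Qed.

Lemma inZp_divn (r : rat) (m : nat) :
  m != 0%N -> Defs.inZp p (r / m%:R) -> Defs.inZp p r.
Proof.
move=> m0 /inZp_intP[n Hn]; apply/inZp_intP; exists n.
have -> : r * (p ^ n)%:R = r / m%:R * (p ^ n)%:R * m%:R.
  by field; rewrite pnatr_eq0.
by rewrite rpredM ?natr_int.
Qed.

Lemma inZp_subz (r : rat) (k : int) : Defs.inZp p (r - k%:~R) -> Defs.inZp p r.
Proof.
move=> /inZp_intP[n Hn]; apply/inZp_intP; exists n.
have -> : r * (p ^ n)%:R = (r - k%:~R) * (p ^ n)%:R + k%:~R * (p ^ n)%:R by ring.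
by rewrite rpredD // rpredM ?natr_int ?intr_int.
Qed.

End InZp.

Section Weights.
Variables (p f : nat).
Hypotheses (p_gt0 : (0 < p)%N) (f_gt0 : (0 < f)%N).

Local Notation Minv := (Minv p f).

Lemma natr_p_neq0 : (p%:R : rat) != 0.
Proof. by rewrite pnatr_eq0 -lt0n. Qed.

Lemma natr_expp_neq0 n : ((p ^ n)%:R : rat) != 0.
Proof. by rewrite pnatr_eq0 -lt0n expn_gt0 p_gt0. Qed.

Lemma wt_cons a e : wt p (a :: e) = a + p%:R * wt p e.
Proof.
rewrite /wt big_ord_recl /= expn0 mul1r mulr_sumr; congr (_ + _).
by apply: eq_bigr => i _; rewrite /bump /= expnS natrM mulrA.
Qed.

Lemma wt_rcons e b : wt p (rcons e b) = wt p e + (p ^ size e)%:R * b.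
Proof.
rewrite /wt size_rcons big_ord_recr /= nth_rcons ltnn eqxx; congr (_ + _).
by apply: eq_bigr => i _; rewrite nth_rcons ltn_ord.
Qed.

Lemma size_Minv e : e != [::] -> size (Minv e) = size e.
Proof. by case: e => // a e _; rewrite /Minv size_rcons. Qed.

Lemma size_iter_Minv n e : e != [::] -> size (iter n Minv e) = size e.
Proof.
move=> e0; elim: n => //= n IH.
by rewrite size_Minv ?IH // -size_eq0 IH size_eq0.
Qed.

Lemma wt_Minv e : size e = f -> wt p (Minv e) = wt p e / p%:R.
Proof.
case: e => [_|a e /= <-]; first by rewrite /wt big_ord1 big_ord0 /= !mul0r.
rewrite /Minv wt_rcons /= wt_cons expnS natrM.
by field; rewrite natr_p_neq0 natr_expp_neq0.
Qed.

Lemma wt_iter_Minv n e : size e = f -> wt p (iter n Minv e) = wt p e / p%:R ^+ n.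
Proof.
move=> se; have e0 : e != [::] by rewrite -size_eq0 se -lt0n.
elim: n => [|n IH]; first by rewrite divr1.
rewrite iterS wt_Minv ?size_iter_Minv // IH exprS.
by field; rewrite natr_p_neq0 expf_neq0 ?natr_p_neq0.
Qed.

Lemma Minv_inj a b : a != [::] -> b != [::] -> Minv a = Minv b -> a = b.
Proof.
case: a => // x a _; case: b => // y b _ /rcons_inj[/= -> /mulIf].
by rewrite invr_eq0 natr_expp_neq0 => /(_ isT) ->.
Qed.

Lemma iter_Minv_inj n a b : a != [::] -> b != [::] ->
  iter n Minv a = iter n Minv b -> a = b.
Proof.
move=> a0 b0; elim: n => //= n IH /Minv_inj E; apply/IH/E;
  by rewrite -size_eq0 size_iter_Minv // size_eq0.
Qed.

Lemma Minv_inZp e : e != [::] ->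
  {in Minv e, forall r, Defs.inZp p r} -> {in e, forall r, Defs.inZp p r}.
Proof.
case: e => // a e _ He r; rewrite inE => /predU1P[->|re].
  apply: (@inZp_divn p a (p ^ f)); first by rewrite -lt0n expn_gt0 p_gt0.
  by apply: He; rewrite mem_rcons inE eqxx.
by apply: He; rewrite mem_rcons inE re orbT.
Qed.

Lemma iter_Minv_inZp n e : e != [::] ->
  {in iter n Minv e, forall r, Defs.inZp p r} -> {in e, forall r, Defs.inZp p r}.
Proof.
move=> e0; elim: n => //= n IH /Minv_inZp He; apply/IH/He.
by rewrite -size_eq0 size_iter_Minv // size_eq0.
Qed.

End Weights.

Section Supports.
Variables (p : nat) (F : fieldType).
Implicit Types (c : seq rat -> F) (W N : rat).

Definition supp_wt_ge W c : Prop := forall e, c e != 0 -> W <= wt p e.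

Definition supp_wt_lt c N : set (seq rat) := [set e | c e != 0 /\ wt p e < N].

Lemma supp_wt_ge_le W W' c : W <= W' -> supp_wt_ge W' c -> supp_wt_ge W c.
Proof. by move=> WW' cW' e /cW'; apply: le_trans. Qed.

Lemma finite_supp_wt_ltP c N :
  (exists s : seq (seq rat), forall e, c e != 0 -> wt p e < N -> e \in s) <->
  finite_set (supp_wt_lt c N).
Proof.
split=> [[s Hs]|/finite_seqP[s Es]].
  by apply: (sub_finite_set _ (finite_seq s)) => e [ce wN]; apply: Hs.
by exists s => e ce wN; have : supp_wt_lt c N e by []; rewrite Es.
Qed.

Lemma supp_wt_ge_min c N : finite_set (supp_wt_lt c N) ->
  exists W, supp_wt_ge W c /\ (W = N \/ exists2 e, c e != 0 & W = wt p e).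
Proof.
move=> /finite_seqP[s Es].
have sP e : e \in s <-> supp_wt_lt c N e by rewrite Es.
exists (\big[Num.min/N]_(e <- s) wt p e); split.
  move=> e ce; have [wN|Nw] := ltP (wt p e) N.
    by apply: ge_bigmin_seq => //; apply/sP.
  exact: le_trans (bigmin_le_id _ _ _ _) Nw.
rewrite big_seq; elim/big_ind: _ => [|a b|e /sP[ce _]]; [by left| |by right; exists e].
by move=> Ha Hb; rewrite minEle; case: ifP.
Qed.

End Supports.

Section Norm.
Variables (p f : nat) (F : fieldType) (R : realType).
Hypothesis p_gt1 : (1 < p)%N.
Implicit Types (c : seq rat -> F) (W : rat).

Local Notation pR := (p%:R : R).

Lemma pR_ge1 : 1 <= pR.
Proof. by rewrite ler1n ltnW. Qed.

Lemma ler_powRN W W' : W <= W' -> pR `^ (- ratr W') <= pR `^ (- ratr W).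
Proof. by move=> WW'; apply: (ler_powR pR_ge1); rewrite lerN2 ler_rat. Qed.

Lemma powR_ratrN_natr n : pR `^ (- ratr (n%:R : rat)) = pR ^- n.
Proof. by rewrite ratr_nat powR_invn ?ler0n. Qed.

Lemma powR_ratrN_lt1 d : 0 < d -> pR `^ (- ratr d) < 1.
Proof.
move=> d0; rewrite powRN invf_lt1 ?powR_gt0 ?ltr0n 1?ltnW // lt_neqAle.
rewrite eq_sym powR_eq1 pnatr_eq1 (gtn_eqF p_gt1) ltNge ler0n fmorph_eq0 gt_eqF //=.
by rewrite -{1}(powRr0 pR) (ler_powR pR_ge1) // ler0q ltW.
Qed.

Lemma pR_neq0 : pR != 0.
Proof. by rewrite pnatr_eq0 gtn_eqF // ltnW. Qed.

Lemma normA_ubound W c : supp_wt_ge p W c ->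
  ubound [set pR `^ (- ratr (wt p e)) | e in [set e | c e != 0]] (pR `^ (- ratr W)).
Proof. by move=> cW _ [e /= ce <-]; apply/ler_powRN/cW. Qed.

Lemma normA_supp0 c : ~ (exists e, c e != 0) -> normA p R c = 0.
Proof.
move=> c0; rewrite /normA (_ : [set _ | e in _] = set0) ?sup0 //.
by apply/seteqP; split=> // y [e ce _]; apply: c0; exists e.
Qed.

(* [W] only makes the set whose [sup] is [normA p R c] bounded, so that this
   [sup] is a genuine supremum. *)
Lemma le_normA W c e : supp_wt_ge p W c -> c e != 0 ->
  pR `^ (- ratr (wt p e)) <= normA p R c.
Proof.
move=> cW ce; set E := [set pR `^ (- ratr (wt p e)) | e in [set e | c e != 0]].
have hsE : has_sup E.
  split; first by exists (pR `^ (- ratr (wt p e))), e.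
  by exists (pR `^ (- ratr W)); apply: normA_ubound.
by apply: (sup_upper_bound hsE); exists e.
Qed.

Lemma normA_ge0 W c : supp_wt_ge p W c -> 0 <= normA p R c.
Proof.
move=> cW; have [[e ce]|c0] := pselect (exists e, c e != 0); last by rewrite normA_supp0.
exact: le_trans (powR_ge0 _ _) (le_normA cW ce).
Qed.

Lemma normA_le W c : supp_wt_ge p W c -> normA p R c <= pR `^ (- ratr W).
Proof.
move=> cW; have [[e ce]|c0] := pselect (exists e, c e != 0).
  by apply: ge_sup (normA_ubound cW); exists (pR `^ (- ratr (wt p e))), e.
by rewrite normA_supp0 ?powR_ge0.
Qed.

Lemma supp_gap_of_normA_lt h c : inA p f c -> normA p R c < pR ^- h ->
  exists2 d, 0 < d & supp_wt_ge p (h%:R + d) c.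
Proof.
move=> [_ cfin] cn; have finN N := proj1 (finite_supp_wt_ltP p c N) (cfin N).
have [W0 [cW0 _]] := supp_wt_ge_min (finN 0).
have wt_gt e : c e != 0 -> h%:R < wt p e.
  move=> ce; rewrite ltNge; apply/negP => wh.
  have := le_lt_trans (le_normA cW0 ce) cn.
  by rewrite -powR_ratrN_natr ltNge ler_powRN.
have [W [cW [WN|[e ce We]]]] := supp_wt_ge_min (finN (h%:R + 1)); subst W.
  by exists 1.
by exists (wt p e - h%:R); rewrite ?subrKC // subr_gt0 wt_gt.
Qed.

Lemma normA_lt_of_supp_gap h d c : 0 < d -> supp_wt_ge p (h%:R + d) c ->
  normA p R c < pR ^- h.
Proof.
move=> d0 cd; apply: le_lt_trans (normA_le cd) _.
rewrite rmorphD opprD powRD ?pR_neq0 ?implybT // powR_ratrN_natr.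
by rewrite gtr_pMr ?powR_ratrN_lt1 // invr_gt0 exprn_gt0 // ltr0n ltnW.
Qed.

Lemma normA_cvg0 h d (g : nat -> seq rat -> F) : 0 < d ->
  (forall N, supp_wt_ge p (h%:R + N.+1%:R * d) (g N)) ->
  (fun N => normA p R (g N)) @ \oo --> (0 : R).
Proof.
move=> d0 gN; set r := pR `^ (- ratr d).
apply: (@squeeze_cvgr _ _ _ _ (fun=> 0) (geometric (pR `^ (- ratr (h%:R + d))) r));
  [|exact: cvg_cst|by apply: cvg_geometric; rewrite ger0_norm ?powR_ge0 ?powR_ratrN_lt1].
apply: nearW => N; rewrite (normA_ge0 (gN N)) /=; apply: le_trans (normA_le (gN N)) _.
have -> : - ratr (h%:R + N.+1%:R * d) = - ratr (h%:R + d) + (- ratr d) * (N%:R : R).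
  by rewrite !rmorphD rmorphM /= !ratr_nat mulrSr; ring.
by rewrite powRD ?pR_neq0 ?implybT // powRrM powR_mulrn ?powR_ge0.
Qed.

End Norm.

Lemma sum_ord_stable (V : nmodType) (g : nat -> V) M N :
  (forall n, (M <= n)%N -> g n = 0) -> (M <= N)%N ->
  \sum_(n < N) g n = \sum_(n < M) g n.
Proof.
move=> g0 MN; rewrite -!(big_mkord xpredT) (@big_cat_nat _ _ _ M 0 N) //=.
rewrite [X in _ + X]big1_seq ?addr0 // => n /andP[_].
by rewrite mem_index_iota => /andP[/g0].
Qed.

Section Operator.
Variables (p f : nat) (F : fieldType) (h : nat) (lam : F).
Hypotheses (p_gt1 : (1 < p)%N) (f_gt0 : (0 < f)%N).
Implicit Types (c : seq rat -> F) (e : seq rat).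

Local Notation q := ((p ^ f)%:R : rat).
Local Notation Minv := (Minv p f).
Local Notation U := (Uop p f lam h).

Let p_gt0 : (0 < p)%N := ltnW p_gt1.

Definition Uexp : int := - (((p ^ f).-1 * h)%N)%:Z.

Definition Upreim e : seq rat :=
  if e is a :: e' then iter f Minv ((a - Uexp%:~R) :: e') else [::].

Lemma Uexp_ratr : Uexp%:~R = - (q - 1) * h%:R :> rat.
Proof.
rewrite /Uexp mulrNz -pmulrn natrM.
have : (0 < p ^ f)%N by rewrite expn_gt0 p_gt0.
by case: (p ^ f)%N => // m _; rewrite -addn1 natrD addn1 /=; ring.
Qed.

Lemma q_ge2 : 2 <= q.
Proof.
rewrite (ler_nat rat 2); case: f f_gt0 => // f' _.
by rewrite expnS -[2%N]muln1 leq_mul // expn_gt0 p_gt0.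
Qed.

Lemma iter_phiA n c e : size e = f -> iter n (@phiA p f F) c e = c (iter n Minv e).
Proof.
elim: n e => // n IH e se.
rewrite iterS /phiA se eqxx IH ?iterSr // size_Minv ?se //.
by rewrite -size_eq0 se -lt0n.
Qed.

Lemma phiq_size_neq c e : size e != f -> phiq p f c e = 0.
Proof. by rewrite /phiq; case: f f_gt0 => // f' _ se; rewrite iterS /phiA (negPf se). Qed.

Lemma UopE c e : U c e = if size e == f then lam * c (Upreim e) else 0.
Proof.
rewrite /Uop /mulT0; case: e => [|a e] /=.
  by rewrite eq_sym (gtn_eqF f_gt0) phiq_size_neq ?mulr0 // eq_sym -lt0n.
case: eqP => se; first by rewrite /phiq iter_phiA.
by rewrite phiq_size_neq ?mulr0 //; apply/eqP.
Qed.

Lemma Uop_neq0 c e : U c e != 0 -> size e = f /\ c (Upreim e) != 0.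
Proof.
rewrite UopE; case: (size e =P f) => [se|_]; last by rewrite eqxx.
by rewrite mulf_eq0 negb_or => /andP[].
Qed.

Lemma wt_Upreim e : size e = f -> wt p e - h%:R = q * (wt p (Upreim e) - h%:R).
Proof.
case: e => [se|a e se]; first by move: f_gt0; rewrite -se.
rewrite /Upreim wt_iter_Minv // !wt_cons Uexp_ratr -natrX.
by field; rewrite natr_expp_neq0.
Qed.

Lemma Upreim_inj : injective Upreim.
Proof.
have Upreim_size a e : size (Upreim (a :: e)) = (size e).+1 by rewrite size_iter_Minv.
case=> [|a e] [|b e'] //; [move/(congr1 size)|move/(congr1 size)|]; rewrite ?Upreim_size //.
by move/(iter_Minv_inj p_gt0) => /(_ isT isT) [/addIr -> ->].
Qed.

Lemma Upreim_inZp e : size e = f ->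
  {in Upreim e, forall r, Defs.inZp p r} -> {in e, forall r, Defs.inZp p r}.
Proof.
case: e => [se|a e _ /iter_Minv_inZp He r]; first by move: f_gt0; rewrite -se.
rewrite inE => /predU1P[->|re]; last by apply: He; rewrite // inE re orbT.
by apply: (@inZp_subz p a Uexp); apply: He; rewrite // inE eqxx.
Qed.

Lemma Uop_supp d c : supp_wt_ge p (h%:R + d) c -> supp_wt_ge p (h%:R + q * d) (U c).
Proof.
move=> cd e /Uop_neq0[se /cd]; have := wt_Upreim se.
have q_ge0 : 0 <= q by apply: le_trans q_ge2.
set w := wt p (Upreim e) => E wd.
have : q * d <= q * (w - h%:R) by apply: ler_wpM2l => //; lra.
lra.
Qed.

Lemma iter_Uop_supp d c n : 0 <= d -> supp_wt_ge p (h%:R + d) c ->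
  supp_wt_ge p (h%:R + n.+1%:R * d) (iter n U c).
Proof.
move=> d0 cd; elim: n => [|n IH]; first by rewrite mul1r.
apply: supp_wt_ge_le (Uop_supp IH); rewrite lerD2l.
have dn : d <= n.+1%:R * d by rewrite ler_peMl // ler1n.
have qn : 2 * (n.+1%:R * d) <= q * (n.+1%:R * d) by rewrite ler_wpM2r ?q_ge2 ?mulr_ge0.
rewrite -natr1 mulrDl mul1r; lra.
Qed.

Lemma inA_Uop c : inA p f c -> inA p f (U c).
Proof.
move=> [csupp cfin]; split=> [e /Uop_neq0[se /csupp[_ He]]|N].
  by split=> //; apply: Upreim_inZp.
have /finite_supp_wt_ltP fin := cfin (h%:R + (N - h%:R) / q).
apply/finite_supp_wt_ltP/(sub_finite_set _ (finite_preimage (in2W Upreim_inj) fin)).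
move=> e [/Uop_neq0[se ce] wN]; split=> //.
have q_gt0 : 0 < q by apply: lt_le_trans q_ge2.
rewrite -ltrBlDl ltr_pdivlMr // mulrC -wt_Upreim //; lra.
Qed.

Lemma UopB a b : U (fun e => a e - b e) = (fun e => U a e - U b e).
Proof. by apply: funext => e; rewrite !UopE; case: ifP; rewrite ?mulrBr ?subr0. Qed.

Lemma Uop_fixed_eq0 d c : 0 < d -> supp_wt_ge p (h%:R + d) c -> U c = c -> c = (fun=> 0).
Proof.
move=> d0 cd Uc; apply: funext => e; apply/eqP; apply: contraT => ce.
pose n := Num.truncn ((wt p e - h%:R) / d).
have := iter_Uop_supp (n := n) (ltW d0) cd; rewrite (iter_fix n Uc) => /(_ e ce).
have := truncnS_gt ((wt p e - h%:R) / d); rewrite -/n ltr_pdivrMr //; lra.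
Qed.

Lemma sub_Uop_inj a b d d' : 0 < d -> 0 < d' ->
  supp_wt_ge p (h%:R + d) a -> supp_wt_ge p (h%:R + d') b ->
  (fun e => a e - U a e) = (fun e => b e - U b e) -> a = b.
Proof.
move=> d0 d'0 ad bd' eq_ab; pose D e := a e - b e.
have UD : U D = D.
  apply: funext => e; rewrite /D UopB; have /= Eab := congr1 (fun g => g e) eq_ab.
  have -> : U a e - U b e = (b e - U b e) - (a e - U a e) + (a e - b e) by ring.
  by rewrite Eab subrr add0r.
have DW : supp_wt_ge p (h%:R + Num.min d d') D.
  move=> e De; have [ae|/ad] := eqVneq (a e) 0.
    have /bd' : b e != 0 by move: De; rewrite /D ae sub0r oppr_eq0.
    by apply: le_trans; rewrite lerD2l ge_min lexx orbT.
  by apply: le_trans; rewrite lerD2l ge_min lexx.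
have md : 0 < Num.min d d' by rewrite lt_min d0 d'0.
have D0 := Uop_fixed_eq0 md DW UD.
by apply: funext => e; apply/eqP; rewrite -subr_eq0 -/(D e) D0.
Qed.

Section Series.
Variables (y : seq rat -> F) (d : rat).
Hypotheses (y_inA : inA p f y) (d_gt0 : 0 < d) (y_supp : supp_wt_ge p (h%:R + d) y).

Local Notation Y n := (iter n U y).

Definition Uop_series_len e : nat := Num.truncn ((wt p e - h%:R) / d).

Definition Uop_series e : F := \sum_(n < Uop_series_len e) Y n e.

Lemma iter_Uop_neq0_lt n e : Y n e != 0 -> (n < Uop_series_len e)%N.
Proof.
move/(iter_Uop_supp (ltW d_gt0) y_supp); rewrite truncn_gt_nat ler_pdivlMr //; lra.
Qed.

Lemma iter_Uop_eq0 n e : (Uop_series_len e <= n)%N -> Y n e = 0.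
Proof.
by move=> len_n; apply/eqP; apply: contraTT len_n => /iter_Uop_neq0_lt; rewrite -ltnNge.
Qed.

Lemma Uop_series_partial N e : (forall n, (N <= n)%N -> Y n e = 0) ->
  \sum_(n < N) Y n e = Uop_series e.
Proof.
move=> YN; transitivity (\sum_(n < maxn N (Uop_series_len e)) Y n e).
  by symmetry; apply: (sum_ord_stable (g := fun n => Y n e) YN); rewrite leq_maxl.
apply: (sum_ord_stable (g := fun n => Y n e)); last by rewrite leq_maxr.
by move=> n; apply: iter_Uop_eq0.
Qed.

Lemma Uop_series_tail_supp N :
  supp_wt_ge p (h%:R + N.+1%:R * d) (fun e => Uop_series e - \sum_(n < N) Y n e).
Proof.
move=> e; apply: contraNT; rewrite -ltNge => wN.
have lenN : (Uop_series_len e <= N)%N by rewrite truncn_le_nat ltr_pdivrMr //; lra.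
rewrite Uop_series_partial ?subrr // => n Nn.
by apply: iter_Uop_eq0; apply: leq_trans Nn.
Qed.

Lemma Uop_series_supp : supp_wt_ge p (h%:R + d) Uop_series.
Proof.
by move=> e xe; have /= := @Uop_series_tail_supp 0 e; rewrite big_ord0 subr0 mul1r; apply.
Qed.

Lemma Uop_series_eq : (fun e => Uop_series e - U Uop_series e) = y.
Proof.
apply: funext => e; rewrite UopE; case: (size e =P f) => [se|/eqP se]; last first.
  rewrite subr0 -(Uop_series_partial (N := 1)) ?big_ord1 // => -[|n] // _.
  by rewrite iterS UopE (negPf se).
set M := maxn (Uop_series_len e) (Uop_series_len (Upreim e)).
rewrite -(Uop_series_partial (N := M.+1) (e := e)); last first.
  by move=> n /ltnW /(leq_trans (leq_maxl _ _)) /iter_Uop_eq0.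
rewrite -(Uop_series_partial (N := M) (e := Upreim e)); last first.
  by move=> n /(leq_trans (leq_maxr _ _)) /iter_Uop_eq0.
rewrite big_ord_recl mulr_sumr (eq_bigr (fun i : 'I_M => lam * Y i (Upreim e))) ?addrK //.
by move=> i _; rewrite /bump /= UopE se eqxx.
Qed.

Lemma Uop_series_neq0 e : Uop_series e != 0 -> exists n, Y n e != 0.
Proof.
rewrite /Uop_series => /eqP; apply: contra_notP => Y0.
by apply: big1 => n _; apply: contra_notP Y0 => /eqP Yn; exists n.
Qed.

Lemma inA_Uop_series : inA p f Uop_series.
Proof.
have YA n : inA p f (Y n) by elim: n => //= n; apply: inA_Uop.
split=> [e /Uop_series_neq0[n /(YA n).1] //|N].
have finY n : finite_set (supp_wt_lt p (Y n) N) by apply/finite_supp_wt_ltP/(YA n).2.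
pose K := Num.truncn ((N - h%:R) / d).
apply/finite_supp_wt_ltP/(sub_finite_set _ (bigcup_finite (finite_II K) (fun n _ => finY n))).
move=> e [/Uop_series_neq0[n Yn] wN]; exists n => //.
rewrite /= truncn_gt_nat ler_pdivlMr //.
by have := iter_Uop_supp (n := n) (ltW d_gt0) y_supp Yn; lra.
Qed.

End Series.

End Operator.

Theorem lemma4p6 (p f : nat) (F : finFieldType) (R : realType)
    (h : nat) (l0 l1 : F) :
  prime p -> odd p -> (0 < f)%N -> p \in [pchar F] ->
  (h <= p ^ f - 2)%N -> l0 != 0 -> l1 != 0 ->
  forall y : seq rat -> F, inA p f y ->
  normA p R y < (p%:R : R) ^- h ->
  exists x : seq rat -> F,
    [/\ inA p f x, normA p R x < (p%:R : R) ^- h,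
        (fun e => x e - Uop p f (l0 / l1) h x e) = y &
        (fun N : nat => normA p R
           (fun e => x e - \sum_(n < N) iter n (Uop p f (l0 / l1) h) y e))
          @ \oo --> (0 : R)] /\
    (forall x' : seq rat -> F, inA p f x' -> normA p R x' < (p%:R : R) ^- h ->
       (fun e => x' e - Uop p f (l0 / l1) h x' e) = y -> x' = x).
Proof.
move=> /prime_gt1 p_gt1 _ f_gt0 _ _ _ _ y y_inA y_norm.
have [d d_gt0 y_supp] := supp_gap_of_normA_lt p_gt1 y_inA y_norm.
have x_supp := Uop_series_supp (lam := l0 / l1) p_gt1 f_gt0 d_gt0 y_supp.
exists (Uop_series p f h (l0 / l1) y d); split; [split|].
- exact: inA_Uop_series.
- exact: (normA_lt_of_supp_gap R p_gt1 d_gt0 x_supp).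
- exact: Uop_series_eq.
- exact: (normA_cvg0 p_gt1 d_gt0 (Uop_series_tail_supp p_gt1 f_gt0 d_gt0 y_supp)).
move=> x' x'_inA x'_norm x'_eq.
have [d' d'_gt0 x'_supp] := supp_gap_of_normA_lt p_gt1 x'_inA x'_norm.
apply: (sub_Uop_inj (lam := l0 / l1) p_gt1 f_gt0 d'_gt0 d_gt0 x'_supp x_supp).
by rewrite x'_eq Uop_series_eq.
Qed.
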